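(* Assume Assumptions A, B, C, D hold, let $w^{(t)}$ be generated by Algorithm 2 with $\eta^{(t)}=D\sqrt{\varepsilon}$ ($D>0$), and suppose $\alpha_i^{(t)}\le\alpha/L_\phi$ for some $\alpha\in(0,\tfrac14)$. Then for all $i\in[n]$ and $0\le t<T$, $$\|h(w^{(t+1)};i)-h_i^*\|^2\le(1+\varepsilon)\|h(w^{(t)};i)-h_i^*\|^2-2(1-4\alpha)\alpha_i^{(t)}\big[\phi_i(h(w^{(t)};i))-\phi_i(h_i^* )\big]+\varepsilon(4\varepsilon+3)\Big[D^2H^2+c\big(2+(V+\varepsilon^2+2)GD^2\big)^2\Big]+\frac{4\varepsilon+3}{\varepsilon}\big\|\eta^{(t)}H_i^{(t)}v_{*\mathrm{reg}}^{(t)}-\alpha_i^{(t)}\nabla\phi_i(h(w^{(t)};i))\big\|^2.$$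
   Context: Let $n,c,d$ be positive integers and $[n]=\{1,\dots,n\}$. For each $i\in[n]$ let $h(\cdot;i):\mathbb{R}^d\to\mathbb{R}^c$ (components $h_j(\cdot;i)$) and $\phi_i:\mathbb{R}^c\to\mathbb{R}$. Each $\phi_i$ attains its minimum at $h_i^*$. Norms: Euclidean for vectors, operator for matrices. Assumption A: each $\phi_i$ is convex, bounded below, and $L_\phi$-smooth. Assumption B: each $h(\cdot;i)$ is twice continuously differentiable and there is $G>0$ with $\|\nabla_w^2 h_j(w;i)\|\le G$ for all $w,i,j$. Iteration setup: given $\varepsilon>0$, $\eta^{(t)}>0$, $\alpha_i^{(t)}>0$ and iterates $w^{(t)}$, let $H_i^{(t)}$ be the Jacobian of $h(\cdot;i)$ at $w^{(t)}$, $\Phi^{(t)}(v)=\frac{1}{2n}\sum_{i=1}^n\|\eta^{(t)}H_i^{(t)}v-\alpha_i^{(t)}\nabla\phi_i(h(w^{(t)};i))\|^2$, $\Psi^{(t)}(v)=\Phi^{(t)}(v)+\frac{\varepsilon^2}{2}\|v\|^2$, $v_{*\mathrm{reg}}^{(t)}$ its unique minimizer. Algorithm 2: $w^{(0)}$ arbitrary, $w^{(t+1)}=w^{(t)}-\eta^{(t)}v^{(t)}$ where $\|v^{(t)}-v_{*\mathrm{reg}}^{(t)}\|\le\varepsilon$, $t=0,\dots,T-1$. Assumption C (constant $V>0$): for each $0\le t<T$ there is $\hat v^{(t)}$ with $\|\hat v^{(t)}\|^2\le V$ and $\Phi^{(t)}(\hat v^{(t)})\le\varepsilon^2$. Assumption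 D (constant $H>0$): $\|H_i^{(t)}\|\le H/\sqrt\varepsilon$ for all $i\in[n]$, $0\le t<T$. *)

From HB Require Import structures.
From mathcomp Require Import all_boot all_order all_algebra.
From mathcomp Require Import all_classical all_reals all_analysis.
Set Implicit Arguments. Unset Strict Implicit. Unset Printing Implicit Defensive.
Import Order.TTheory GRing.Theory Num.Theory.
Import numFieldNormedType.Exports.
Local Open Scope ring_scope.
Local Open Scope classical_set_scope.

Section Defs.
Variable R : realType.

(* Euclidean norm of a row vector (the library norm on 'rV is the max norm). *)
Definition enorm k (v : 'rV[R]_k) : R := Num.sqrt (\sum_(j < k) (v ord0 j) ^+ 2).

Definition opnorm m k (A : 'M[R]_(m, k)) : R :=
  sup [set enorm (x *m A) | x in [set x : 'rV[R]_m | enorm x <= 1]].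

(* scalar function viewed as 'rV_1-valued, to use the library jacobian *)
Definition liftR k (g : 'rV[R]_k -> R) : 'rV[R]_k -> 'rV[R]_1 :=
  fun x => \row_(_ < 1) g x.

Definition grad k (g : 'rV[R]_k -> R) (x : 'rV[R]_k) : 'rV[R]_k :=
  (jacobian (liftR g) x)^T.

Definition hess k (g : 'rV[R]_k -> R) (x : 'rV[R]_k) : 'M[R]_k :=
  jacobian (grad g) x.

Definition C2 k (g : 'rV[R]_k -> R) : Prop :=
  (forall x, differentiable (liftR g) x) /\
  (forall x, differentiable (grad g) x) /\
  continuous (hess g).

Definition convex_fun k (g : 'rV[R]_k -> R) : Prop :=
  forall (x y : 'rV[R]_k) (s : R), 0 <= s -> s <= 1 ->
    g (s *: x + (1 - s) *: y) <= s * g x + (1 - s) * g y.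

Definition bounded_below k (g : 'rV[R]_k -> R) : Prop :=
  exists m : R, forall x, m <= g x.

Definition smooth_with k (L : R) (g : 'rV[R]_k -> R) : Prop :=
  (forall x, differentiable (liftR g) x) /\
  (forall x y, enorm (grad g x - grad g y) <= L * enorm (x - y)).

(* Phi^(t)(v) = 1/(2n) sum_i || eta H_i v - alpha_i grad phi_i(h(w;i)) ||^2,
   with H_i v written in the library's row convention v *m jacobian. *)
Definition PhiT n d c (h : 'I_n -> 'rV[R]_d -> 'rV[R]_c)
  (phi : 'I_n -> 'rV[R]_c -> R) (eta : R) (alpha : 'I_n -> R)
  (w : 'rV[R]_d) (v : 'rV[R]_d) : R :=
  (2 * n%:R)^-1 * \sum_(i < n)
     enorm (eta *: (v *m jacobian (h i) w) - alpha i *: grad (phi i) (h i w)) ^+ 2.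

Definition PsiT n d c (h : 'I_n -> 'rV[R]_d -> 'rV[R]_c)
  (phi : 'I_n -> 'rV[R]_c -> R) (eta : R) (alpha : 'I_n -> R)
  (eps : R) (w : 'rV[R]_d) (v : 'rV[R]_d) : R :=
  PhiT h phi eta alpha w v + eps ^+ 2 / 2 * enorm v ^+ 2.

End Defs.

(* One step moves [h(w;i)] by [-eta H_i v] plus a second-order Taylor remainder [r].
   Writing [eta H_i v = alpha_i grad phi_i + e + f], with [e] the residual of the
   regularized subproblem at [v_reg] and [f = eta H_i (v - v_reg)] the error of the
   inexact solve, the new error is [(h - h^* - alpha_i grad phi_i) - e - f + r].
   Convexity and [L]-smoothness of [phi_i] make the exact gradient step a descent
   step, and Young's inequality with weight [eps] splits off the perturbations:
   [|f|] is small by Assumption D, and [|r|] by the Hessian bound [G] once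
   [|v_reg|^2 <= 2 + V] is known, which follows from comparing the regularized
   objective at [v_reg] with its value at the point given by Assumption C. *)

From HB Require Import structures.
From mathcomp Require Import all_boot all_order all_algebra.
From mathcomp Require Import all_classical all_reals all_analysis.
From mathcomp Require Import ring lra.
Import Order.TTheory GRing.Theory Num.Theory.
Import numFieldNormedType.Exports.
Set Implicit Arguments.
Unset Strict Implicit.
Unset Printing Implicit Defensive.
Local Open Scope classical_set_scope.
Local Open Scope ring_scope.

Section EuclideanRow.
Variables (R : realType) (k : nat).
Implicit Types (u v x y z : 'rV[R]_k) (a : R).

Definition dot u v : R := \sum_(j < k) u ord0 j * v ord0 j.

Lemma dotC u v : dot u v = dot v u.
Proof. by apply: eq_bigr => j _; rewrite mulrC. Qed.

Lemma dotDl u v x : dot (u + v) x = dot u x + dot v x.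
Proof. by rewrite /dot -big_split; apply: eq_bigr => j _; rewrite mxE mulrDl. Qed.

Lemma dotZl a u x : dot (a *: u) x = a * dot u x.
Proof. by rewrite /dot mulr_sumr; apply: eq_bigr => j _; rewrite mxE mulrA. Qed.

Lemma dotNl u x : dot (- u) x = - dot u x.
Proof. by rewrite -scaleN1r dotZl mulN1r. Qed.

Lemma dotBl u v x : dot (u - v) x = dot u x - dot v x.
Proof. by rewrite dotDl dotNl. Qed.

Lemma dotDr u v x : dot x (u + v) = dot x u + dot x v.
Proof. by rewrite dotC dotDl !(dotC x). Qed.

Lemma dotZr a u x : dot x (a *: u) = a * dot x u.
Proof. by rewrite dotC dotZl dotC. Qed.

Lemma dotNr u x : dot x (- u) = - dot x u.
Proof. by rewrite dotC dotNl dotC. Qed.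

Lemma dotBr u v x : dot x (u - v) = dot x u - dot x v.
Proof. by rewrite dotDr dotNr. Qed.

Lemma dotxx_ge0 u : 0 <= dot u u.
Proof. by apply: sumr_ge0 => j _; rewrite -expr2 sqr_ge0. Qed.

Lemma enorm_ge0 u : 0 <= enorm u.
Proof. exact: sqrtr_ge0. Qed.

Lemma enorm_sqr u : enorm u ^+ 2 = dot u u.
Proof.
rewrite /enorm sqr_sqrtr; last by apply: sumr_ge0 => j _; rewrite sqr_ge0.
by apply: eq_bigr => j _; rewrite expr2.
Qed.

Lemma enormZ a u : enorm (a *: u) = `|a| * enorm u.
Proof.
apply: (@pexpIrn _ 2) => //; rewrite ?nnegrE ?mulr_ge0 ?enorm_ge0 //.
by rewrite exprMn !enorm_sqr dotZl dotZr mulrA -expr2 real_normK ?num_real.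
Qed.

Lemma enormN u : enorm (- u) = enorm u.
Proof. by rewrite -scaleN1r enormZ normrN1 mul1r. Qed.

Lemma enorm0 : enorm (0 : 'rV[R]_k) = 0.
Proof. by rewrite -(scale0r (0 : 'rV[R]_k)) enormZ normr0 mul0r. Qed.

Lemma enorm_eq0_dot u v : enorm u = 0 -> dot u v = 0.
Proof.
move=> u0; have /psumr_eq0P uu0 : dot u u = 0 by rewrite -enorm_sqr u0 expr0n.
rewrite /dot big1 // => j _.
have /eqP := uu0 (fun l _ => ltac:(by rewrite -expr2 sqr_ge0)) j isT.
by rewrite mulf_eq0 orbb => /eqP ->; rewrite mul0r.
Qed.

(* Expand [0 <= |b u - a v|^2] with [a = |u|], [b = |v|]: this gives
   [a b (a b - <u,v>) >= 0]. *)
Lemma dot_le_enorm u v : dot u v <= enorm u * enorm v.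
Proof.
set a := enorm u; set b := enorm v.
have [a0 b0] : 0 <= a /\ 0 <= b by split; apply: enorm_ge0.
have [ab0|ab0] := eqVneq (a * b) 0.
  move: ab0 => /eqP; rewrite mulf_eq0 => /orP[] /eqP ?.
  - by rewrite enorm_eq0_dot // mulr_ge0.
  - by rewrite dotC enorm_eq0_dot // mulr_ge0.
have abp : 0 < a * b by rewrite lt_def ab0 mulr_ge0.
have := dotxx_ge0 (b *: u - a *: v).
rewrite !(dotBl, dotBr, dotZl, dotZr) -!enorm_sqr -/a -/b (dotC v u).
nra.
Qed.

Lemma normr_dot_le u v : `|dot u v| <= enorm u * enorm v.
Proof.
rewrite ler_norml dot_le_enorm andbT.
have := dot_le_enorm (- u) v; rewrite dotNl enormN; lra.
Qed.

Lemma enorm_subZ_sqr u v a :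
  enorm (u - a *: v) ^+ 2 = enorm u ^+ 2 - 2 * a * dot u v + a ^+ 2 * enorm v ^+ 2.
Proof. by rewrite !enorm_sqr !(dotBl, dotBr, dotZl, dotZr) (dotC v u); ring. Qed.

Lemma enormD_sqr_le e u v : 0 < e ->
  enorm (u + v) ^+ 2 <= (1 + e) * enorm u ^+ 2 + (1 + e^-1) * enorm v ^+ 2.
Proof.
move=> e0; rewrite !enorm_sqr !(dotDl, dotDr) (dotC v u).
have := dotxx_ge0 (e *: u - v).
rewrite !(dotBl, dotBr, dotZl, dotZr) (dotC v u) => H.
have vv := dotxx_ge0 v.
suff : e * (2 * dot u v) <= e * (e * dot u u + e^-1 * dot v v).
  by rewrite ler_pM2l //; lra.
rewrite mulrDr !mulrA mulfV ?gt_eqF // mul1r; nra.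
Qed.

Lemma enormD2_sqr_le u v :
  enorm (u + v) ^+ 2 <= 2 * enorm u ^+ 2 + 2 * enorm v ^+ 2.
Proof.
have := dotxx_ge0 (u - v).
rewrite !enorm_sqr !(dotDl, dotDr, dotNl, dotNr) (dotC v u); lra.
Qed.

Lemma enormD3_sqr_le x y z :
  enorm (x + y + z) ^+ 2 <= 3 * (enorm x ^+ 2 + enorm y ^+ 2 + enorm z ^+ 2).
Proof.
have := dotxx_ge0 (x - y); have := dotxx_ge0 (y - z); have := dotxx_ge0 (x - z).
rewrite !enorm_sqr !(dotDl, dotDr, dotNl, dotNr) (dotC y x) (dotC z x) (dotC z y).
lra.
Qed.

Lemma enorm_sqr_le_entries x K :
  (forall j, `|x ord0 j| <= K) -> enorm x ^+ 2 <= k%:R * K ^+ 2.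
Proof.
move=> xK; rewrite enorm_sqr /dot.
have -> : k%:R * K ^+ 2 = \sum_(j < k) K ^+ 2 by rewrite sumr_const card_ord mulr_natl.
apply: ler_sum => j _; rewrite -expr2 -real_normK ?num_real //.
by rewrite lerXn2r ?nnegrE ?normr_ge0 // (le_trans _ (xK j)).
Qed.

End EuclideanRow.

Section OperatorNorm.
Variables (R : realType) (m k : nat).
Implicit Types (x : 'rV[R]_m) (A : 'M[R]_(m, k)).

Lemma enorm_mulmx_sqr_le x A :
  enorm (x *m A) ^+ 2 <= enorm x ^+ 2 * \sum_(j < k) enorm (\row_l A l j) ^+ 2.
Proof.
rewrite [X in X <= _]enorm_sqr /dot mulr_sumr; apply: ler_sum => j _.
have -> : (x *m A) ord0 j = dot x (\row_l A l j).
  by rewrite mxE /dot; apply: eq_bigr => l _; rewrite mxE.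
rewrite -expr2 -exprMn -real_normK ?num_real //.
by rewrite lerXn2r ?nnegrE ?normr_ge0 ?mulr_ge0 ?enorm_ge0 ?normr_dot_le.
Qed.

Lemma opnorm_has_sup A :
  has_sup [set enorm (x *m A) | x in [set x : 'rV[R]_m | enorm x <= 1]].
Proof.
split; first by exists (enorm (0 *m A)), 0; rewrite //= enorm0 ler01.
exists (1 + \sum_(j < k) enorm (\row_l A l j) ^+ 2) => _ [x /= x1 <-].
have S0 : 0 <= \sum_(j < k) enorm (\row_l A l j) ^+ 2 by apply: sumr_ge0 => *; apply: sqr_ge0.
have x21 : enorm x ^+ 2 <= 1 by rewrite -(expr1n _ 2) lerXn2r ?nnegrE ?enorm_ge0.
have := enorm_mulmx_sqr_le x A; have := sqr_ge0 (enorm (x *m A) - 1).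
nra.
Qed.

Lemma enorm_mulmx_le x A : enorm (x *m A) <= opnorm A * enorm x.
Proof.
have [x0|x0] := eqVneq (enorm x) 0.
  have := enorm_mulmx_sqr_le x A; rewrite x0 expr0n mul0r mulr0 => xA0.
  have /eqP : enorm (x *m A) ^+ 2 = 0 by apply: le_anti; rewrite xA0 sqr_ge0.
  by rewrite expf_eq0 /= => /eqP ->.
have xp : 0 < enorm x by rewrite lt_def x0 enorm_ge0.
have scaled : enorm (((enorm x)^-1 *: x) *m A) <= opnorm A.
  apply: sup_upper_bound; first exact: opnorm_has_sup.
  exists ((enorm x)^-1 *: x) => //=.
  by rewrite enormZ ger0_norm ?invr_ge0 ?(ltW xp) // mulVf ?gt_eqF.
rewrite -scalemxAl enormZ ger0_norm ?invr_ge0 ?(ltW xp) // in scaled.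
by rewrite mulrC -ler_pdivrMl.
Qed.

End OperatorNorm.

Section RealTaylor.
Variable R : realType.
Implicit Types (g psi dpsi : R -> R).

Lemma derive_nonpos_le psi dpsi (s0 : R) :
  (forall s : R, is_derive s 1 psi (dpsi s)) -> 0 < s0 ->
  (forall s, 0 < s < s0 -> dpsi s <= 0) -> psi s0 <= psi 0.
Proof.
move=> dpsiP s0_gt0 dpsi_le0.
have psi_cont : {within `[0, s0], continuous psi}.
  apply: derivable_within_continuous => s _.
  exact: (@ex_derive _ _ _ _ _ _ _ (dpsiP s)).
have [s s_in psiE] := MVT s0_gt0 (fun s _ => dpsiP s) psi_cont.
have : dpsi s * (s0 - 0) <= 0.
  by rewrite mulr_le0_ge0 ?dpsi_le0 // subr0 ltW.
by rewrite -psiE subr_le0.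
Qed.

(* Both [g - (first-order part) -+ K s^2/2] are nonincreasing on [0, s0]. *)
Lemma taylor_lipschitz_derive g g' (K s0 : R) :
  (forall s : R, is_derive s 1 g (g' s)) -> 0 < s0 ->
  (forall s, 0 <= s -> `|g' s - g' 0| <= K * s) ->
  `|g s0 - g 0 - s0 * g' 0| <= K * s0 ^+ 2 / 2.
Proof.
move=> dg s0_gt0 g'_lip.
have upper : (g - cst (g 0) - id * cst (g' 0) - id ^+ 2 * cst (K / 2)) s0
    <= (g - cst (g 0) - id * cst (g' 0) - id ^+ 2 * cst (K / 2)) 0.
  apply: (derive_nonpos_le (dpsi := fun s => g' s - g' 0 - 2 * s * (K / 2))) => //.
    move=> s; apply: is_derive_eq.
    by rewrite !(scaler0, add0r, subr0, expr1) [(g' 0)%:A]mulr1 [(2 * s)%:A]mulr1 [_ *: _]mulrC.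
  move=> s /andP[s_gt0 _]; have := g'_lip s (ltW s_gt0); rewrite ler_norml; lra.
have lower : (id * cst (g' 0) + cst (g 0) - g - id ^+ 2 * cst (K / 2)) s0
    <= (id * cst (g' 0) + cst (g 0) - g - id ^+ 2 * cst (K / 2)) 0.
  apply: (derive_nonpos_le (dpsi := fun s => g' 0 - g' s - 2 * s * (K / 2))) => //.
    move=> s; apply: is_derive_eq.
    by rewrite !(scaler0, add0r, addr0, subr0, expr1) [(g' 0)%:A]mulr1 [(2 * s)%:A]mulr1 [_ *: _]mulrC.
  move=> s /andP[s_gt0 _]; have := g'_lip s (ltW s_gt0); rewrite ler_norml; lra.
rewrite !fctE /= in upper lower.
rewrite ler_norml; apply/andP; split; nra.
Qed.

Lemma taylor_bounded_derive2 g g' g'' (K : R) :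
  (forall s : R, is_derive s 1 g (g' s)) -> (forall s : R, is_derive s 1 g' (g'' s)) ->
  (forall s, `|g'' s| <= K) ->
  `|g 1 - g 0 - g' 0| <= K / 2.
Proof.
move=> dg dg' g''_le.
have := taylor_lipschitz_derive (K := K) dg ltr01.
rewrite mul1r expr1n mulr1; apply=> s s_ge0.
have g'_cont : {within `[0, s], continuous g'}.
  apply: derivable_within_continuous => x _.
  exact: (@ex_derive _ _ _ _ _ _ _ (dg' x)).
have [x _ ->] := MVT_segment s_ge0 (fun x _ => dg' x) g'_cont.
by rewrite subr0 normrM (ger0_norm s_ge0) ler_wpM2r.
Qed.

End RealTaylor.

Section LineDerivative.
Variables (R : realType) (k : nat).
Implicit Types (p d : 'rV[R]_k) (s : R).

Lemma is_derive_line_entry m (F : 'rV[R]_k -> 'rV[R]_m) p d (j : 'I_m) s :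
  differentiable F (p + s *: d) ->
  is_derive s 1 (fun s => F (p + s *: d) ord0 j) ((d *m jacobian F (p + s *: d)) ord0 j).
Proof.
move=> dF; set G := fun s : R => F (p + s *: d).
have quotientE : (fun h : R => h^-1 *: ((G \o shift s) (h *: 1) - G s)) =
    (fun h : R => h^-1 *: ((F \o shift (p + s *: d)) (h *: d) - F (p + s *: d))).
  apply: funext => h; rewrite /G /=.
  have -> : h%:A = h by rewrite /GRing.scale /= mulr1.
  by rewrite scalerDl addrCA.
have dG : derivable G s 1 by rewrite /derivable quotientE; apply: diff_derivable.
have DG : 'D_1 G s = d *m jacobian F (p + s *: d).
  by rewrite -deriveEjacobian // /derive quotientE.
apply: DeriveDef; first exact: (derivable_mxP G s 1).1 dG ord0 j.
by have := derive_mx dG; rewrite DG => /matrixP /(_ ord0 j) ->; rewrite mxE.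
Qed.

Lemma is_derive_line (f : 'rV[R]_k -> R) p d s :
  differentiable (liftR f) (p + s *: d) ->
  is_derive s 1 (fun s => f (p + s *: d)) (dot d (grad f (p + s *: d))).
Proof.
move=> df; have := is_derive_line_entry ord0 df.
have -> : (fun s => liftR f (p + s *: d) ord0 ord0) = (fun s => f (p + s *: d)).
  by apply: funext => x; rewrite /liftR mxE.
move/is_derive_eq; apply; rewrite mxE.
by apply: eq_bigr => l _; rewrite /grad [in RHS]mxE.
Qed.

End LineDerivative.

Section SmoothFunction.
Variables (R : realType) (k : nat) (L : R) (f : 'rV[R]_k -> R).
Hypothesis f_smooth : smooth_with L f.

Lemma smooth_taylor (x d : 'rV[R]_k) (s0 : R) : 0 < s0 ->
  `|f (x + s0 *: d) - f x - s0 * dot d (grad f x)| <= L * enorm d ^+ 2 * s0 ^+ 2 / 2.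
Proof.
move: f_smooth => [df grad_lip] s0_gt0.
have := @taylor_lipschitz_derive R (fun s => f (x + s *: d))
  (fun s => dot d (grad f (x + s *: d))) (L * enorm d ^+ 2) s0
  (fun s => is_derive_line (df (x + s *: d))) s0_gt0.
rewrite /= scale0r addr0; apply=> s s_ge0.
rewrite -dotBr (le_trans (normr_dot_le _ _)) //.
have lip : enorm (grad f (x + s *: d) - grad f x) <= L * (s * enorm d).
  have -> : s * enorm d = enorm (x + s *: d - x).
    by rewrite addrAC subrr add0r enormZ ger0_norm.
  exact: grad_lip.
have -> : L * enorm d ^+ 2 * s = enorm d * (L * (s * enorm d)) by ring.
by rewrite ler_wpM2l ?enorm_ge0.
Qed.

Lemma smooth_grad_sqr_le (x xs : 'rV[R]_k) : 0 < L -> (forall y, f xs <= f y) ->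
  enorm (grad f x) ^+ 2 <= 2 * L * (f x - f xs).
Proof.
move=> L_gt0 xs_min.
have Linv_ge0 : 0 <= L^-1 by rewrite invr_ge0 ltW.
have := smooth_taylor x (- (L^-1 *: grad f x)) ltr01.
rewrite scale1r mul1r expr1n mulr1 enormN enormZ dotNl dotZl -enorm_sqr.
rewrite (ger0_norm Linv_ge0) ler_norml => /andP[_ step].
have := xs_min (x - L^-1 *: grad f x).
set G := enorm (grad f x) ^+ 2 in step *.
have quad : L * (L^-1 * enorm (grad f x)) ^+ 2 / 2 = L^-1 * G / 2.
  by rewrite exprMn /G; field; rewrite gt_eqF.
rewrite quad in step => min_le; have : L^-1 * G / 2 <= f x - f xs by lra.
move/(ler_wpM2l (ltW L_gt0)).
have -> : L * (L^-1 * G / 2) = G / 2 by field; rewrite gt_eqF.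
lra.
Qed.

Lemma convex_smooth_first_order (x y : 'rV[R]_k) : convex_fun f -> 0 < L ->
  dot (y - x) (grad f x) <= f y - f x.
Proof.
move=> f_cvx L_gt0.
set d := y - x; set K := L * enorm d ^+ 2.
have K_ge0 : 0 <= K by rewrite /K mulr_ge0 ?sqr_ge0 ?ltW.
have chord s : 0 < s -> s <= 1 -> dot d (grad f x) <= f y - f x + K * s / 2.
  move=> s_gt0 s_le1.
  have := smooth_taylor x d s_gt0; rewrite ler_norml -/K => /andP[tay _].
  have := f_cvx y x s (ltW s_gt0) s_le1.
  have -> : s *: y + (1 - s) *: x = x + s *: d.
    by rewrite /d scalerBr scalerBl scale1r addrC addrA [x - _ + _]addrAC.
  move=> cvx; rewrite -(ler_pM2l s_gt0).
  have : K * s ^+ 2 / 2 = s * (K * s / 2) by rewrite expr2; ring.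
  lra.
apply/ler_addgt0Pr => e e_gt0.
have den_gt0 : 0 < K + e + 1 by lra.
have s_gt0 : 0 < e / (K + e + 1) by rewrite divr_gt0.
have s_le1 : e / (K + e + 1) <= 1 by rewrite ler_pdivrMr // mul1r; lra.
apply: (le_trans (chord _ s_gt0 s_le1)); rewrite lerD2l.
rewrite ler_pdivrMr ?ltr0n // mulrA ler_pdivrMr //.
nra.
Qed.

Lemma gradient_step_sqr_le (x xs : 'rV[R]_k) (a alpha : R) :
  convex_fun f -> 0 < L -> (forall y, f xs <= f y) -> 0 < a -> a * L <= alpha ->
  enorm (x - xs - a *: grad f x) ^+ 2
    <= enorm (x - xs) ^+ 2 - 2 * (1 - alpha) * a * (f x - f xs).
Proof.
move=> f_cvx L_gt0 xs_min a_gt0 aL_le.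
have first_order := convex_smooth_first_order x xs f_cvx L_gt0.
have grad_sqr := smooth_grad_sqr_le x L_gt0 xs_min.
have gap_ge0 : 0 <= f x - f xs by rewrite subr_ge0.
have flip : dot (x - xs) (grad f x) = - dot (xs - x) (grad f x).
  by rewrite -dotNl opprB.
rewrite enorm_subZ_sqr flip.
have : a * (a * enorm (grad f x) ^+ 2) <= a * (a * (2 * L * (f x - f xs))).
  by rewrite !ler_pM2l.
have : a * (a * L) * (f x - f xs) <= a * alpha * (f x - f xs).
  by rewrite ler_wpM2r // ler_pM2l.
have : a * dot (xs - x) (grad f x) <= a * (f xs - f x) by rewrite ler_pM2l.
nra.
Qed.

End SmoothFunction.

Section C2Function.
Variables (R : realType) (k : nat).

Lemma C2_taylor (f : 'rV[R]_k -> R) (G : R) (w u : 'rV[R]_k) :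
  C2 f -> (forall x, opnorm (hess f x) <= G) ->
  `|f (w - u) - f w + dot u (grad f w)| <= G * enorm u ^+ 2 / 2.
Proof.
move=> [df [dgrad _]] hess_le.
have dg (s : R) : is_derive s 1 (fun s => f (w + s *: - u)) (dot (- u) (grad f (w + s *: - u))).
  exact: is_derive_line.
have dg' (s : R) : is_derive s 1 (fun s => dot (- u) (grad f (w + s *: - u)))
                          (dot (- u) (- u *m hess f (w + s *: - u))).
  have : is_derive s 1 (\sum_(l < k) (fun s => (- u) ord0 l * grad f (w + s *: - u) ord0 l))
      (\sum_(l < k) (- u) ord0 l * (- u *m hess f (w + s *: - u)) ord0 l).
    apply: is_derive_sum => l.
    exact: is_deriveZ (is_derive_line_entry l (dgrad _)).
  by rewrite fct_sumE.
have dg'_le (s : R) : `|dot (- u) (- u *m hess f (w + s *: - u))| <= G * enorm u ^+ 2.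
  rewrite (le_trans (normr_dot_le _ _)) // !enormN expr2 mulrCA ler_wpM2l ?enorm_ge0 //.
  rewrite (le_trans (enorm_mulmx_le _ _)) // enormN ler_wpM2r ?enorm_ge0 //.
have := taylor_bounded_derive2 dg dg' dg'_le.
by rewrite scale1r scale0r addr0 dotNl opprK.
Qed.

Lemma differentiable_rV_entries m (F : 'rV[R]_k -> 'rV[R]_m) x :
  (forall j, differentiable (liftR (fun y => F y ord0 j)) x) -> differentiable F x.
Proof.
move=> dF.
have -> : F = \sum_(j < m) (fun y => F y ord0 j *: (delta_mx ord0 j : 'rV[R]_m)).
  apply: funext => y; rewrite fct_sumE; apply/rowP => l.
  rewrite summxE (bigD1 l) //= big1 ?addr0; first by rewrite !mxE eqxx mulr1.
  by move=> j jl; rewrite !mxE (eq_sym l j) (negbTE jl) andbF mulr0.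
apply: differentiable_sum => j; apply: differentiableZl.
have -> : (fun y => F y ord0 j) =
    (fun M : 'M[R]_(1, 1) => M ord0 ord0) \o liftR (fun y => F y ord0 j).
  by apply: funext => y; rewrite /= /liftR mxE.
by apply: differentiable_comp; [exact: dF | exact: differentiable_coord].
Qed.

Lemma mulmx_jacobian_entry m (F : 'rV[R]_k -> 'rV[R]_m) x u j :
  (forall j, differentiable (liftR (fun y => F y ord0 j)) x) ->
  (u *m jacobian F x) ord0 j = dot u (grad (fun y => F y ord0 j) x).
Proof.
move=> dF; set Fj := fun y => F y ord0 j.
have dFx : differentiable F x := differentiable_rV_entries dF.
have DF : ('D_u F x) ord0 j = 'D_u Fj x.
  by rewrite derive_mx ?mxE //; exact: diff_derivable.
have DFj : ('D_u (liftR Fj) x) ord0 ord0 = 'D_u Fj x.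
  rewrite derive_mx ?mxE; last exact: diff_derivable (dF j).
  by congr ('D_u _ x); apply: funext => y; rewrite /liftR mxE.
rewrite -deriveEjacobian // DF -DFj deriveEjacobian ?mxE; last exact: dF j.
by apply: eq_bigr => l _; rewrite /grad [in RHS]mxE.
Qed.

End C2Function.

Section StepEstimates.
Variable R : realType.

Lemma denom_gt0_of_le_div (a alpha L : R) : 0 < a -> 0 < alpha -> a <= alpha / L -> 0 < L.
Proof.
move=> a_gt0 alpha_gt0 a_le; rewrite ltNge; apply/negP => L_le0.
have : alpha / L <= 0 by rewrite pmulr_rle0 // invr_le0.
lra.
Qed.

Lemma taylor_remainder_sqr_le k m (F : 'rV[R]_k -> 'rV[R]_m) (G : R) (w u : 'rV[R]_k) :
  (forall j, C2 (fun x => F x ord0 j)) ->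
  (forall j x, opnorm (hess (fun y => F y ord0 j) x) <= G) ->
  enorm (F (w - u) - F w + u *m jacobian F w) ^+ 2 <= m%:R * (G * enorm u ^+ 2 / 2) ^+ 2.
Proof.
move=> F_C2 hess_le; apply: enorm_sqr_le_entries => j.
rewrite mxE mulmx_jacobian_entry; last by move=> l; case: (F_C2 l).
by rewrite !mxE; apply: C2_taylor.
Qed.

Lemma PhiT_ge0 n d c (h : 'I_n -> 'rV[R]_d -> 'rV[R]_c) (phi : 'I_n -> 'rV[R]_c -> R)
    eta alpha w v :
  0 <= PhiT h phi eta alpha w v.
Proof.
by rewrite /PhiT mulr_ge0 ?invr_ge0 ?mulr_ge0 ?ler0n // sumr_ge0 // => i _; apply: sqr_ge0.
Qed.

Lemma regularized_minimizer_sqr_le d (Phi : 'rV[R]_d -> R) (eps V : R) (vreg vhat : 'rV[R]_d) :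
  0 < eps -> (forall v, 0 <= Phi v) ->
  Phi vreg + eps ^+ 2 / 2 * enorm vreg ^+ 2 <= Phi vhat + eps ^+ 2 / 2 * enorm vhat ^+ 2 ->
  enorm vhat ^+ 2 <= V -> Phi vhat <= eps ^+ 2 ->
  enorm vreg ^+ 2 <= 2 + V.
Proof.
move=> eps_gt0 Phi_ge0 vreg_min vhat_le Phi_vhat_le.
have eps2_gt0 : 0 < eps ^+ 2 / 2 by rewrite divr_gt0 ?exprn_gt0.
rewrite -(ler_pM2l eps2_gt0) mulrDr.
have -> : eps ^+ 2 / 2 * 2 = eps ^+ 2 by rewrite mulfVK ?pnatr_eq0.
have : eps ^+ 2 / 2 * enorm vhat ^+ 2 <= eps ^+ 2 / 2 * V by rewrite ler_pM2l.
have := Phi_ge0 vreg.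
lra.
Qed.

Lemma scaled_step_sqr_le d (v vreg : 'rV[R]_d) (D G V eps : R) :
  0 < eps -> 0 <= G -> enorm (v - vreg) <= eps -> enorm vreg ^+ 2 <= 2 + V ->
  G * enorm ((D * Num.sqrt eps) *: v) ^+ 2 / 2 <= eps * ((V + eps ^+ 2 + 2) * G * D ^+ 2).
Proof.
move=> eps_gt0 G_ge0 v_near vreg_le.
have v_le : enorm v ^+ 2 <= 2 * (2 + V) + 2 * eps ^+ 2.
  rewrite -[v](subrK vreg) addrC (le_trans (enormD2_sqr_le _ _)) //.
  have : enorm (v - vreg) ^+ 2 <= eps ^+ 2.
    by rewrite lerXn2r ?nnegrE ?enorm_ge0 ?(ltW eps_gt0).
  lra.
rewrite enormZ exprMn real_normK ?num_real // exprMn sqr_sqrtr ?(ltW eps_gt0) //.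
have := ler_wpM2l (mulr_ge0 (mulr_ge0 G_ge0 (sqr_ge0 D)) (ltW eps_gt0)) v_le.
lra.
Qed.

(* The slack [2 + X] instead of [X] keeps the form of the published bound. *)
Lemma step_remainder_sqr_le k m (F : 'rV[R]_k -> 'rV[R]_m) (G V D eps : R)
    (w v vreg : 'rV[R]_k) :
  0 < eps -> 0 <= G -> (forall j, C2 (fun x => F x ord0 j)) ->
  (forall j x, opnorm (hess (fun y => F y ord0 j) x) <= G) ->
  enorm (v - vreg) <= eps -> enorm vreg ^+ 2 <= 2 + V ->
  enorm (F (w - (D * Num.sqrt eps) *: v) - F w + ((D * Num.sqrt eps) *: v) *m jacobian F w) ^+ 2
    <= m%:R * (2 + (V + eps ^+ 2 + 2) * G * D ^+ 2) ^+ 2 * eps ^+ 2.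
Proof.
move=> eps_gt0 G_ge0 F_C2 hess_le v_near vreg_le.
apply: (le_trans (taylor_remainder_sqr_le _ _ F_C2 hess_le)).
have := scaled_step_sqr_le D eps_gt0 G_ge0 v_near vreg_le.
set X := (V + eps ^+ 2 + 2) * G * D ^+ 2; set u := (D * Num.sqrt eps) *: v => u_le.
have Gu_ge0 : 0 <= G * enorm u ^+ 2 / 2 by rewrite divr_ge0 // mulr_ge0 ?sqr_ge0.
rewrite -[m%:R * _ * _]mulrA ler_wpM2l ?ler0n // -exprMn.
by rewrite lerXn2r ?nnegrE //; lra.
Qed.

Lemma step_error_sqr_le d c (x : 'rV[R]_d) (J : 'M[R]_(d, c)) (D H eps : R) :
  0 < eps -> 0 <= H -> enorm x <= eps -> opnorm J <= H / Num.sqrt eps ->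
  enorm ((D * Num.sqrt eps) *: (x *m J)) ^+ 2 <= D ^+ 2 * H ^+ 2 * eps ^+ 2.
Proof.
move=> eps_gt0 H_ge0 x_le J_le.
have sqrt_gt0 : 0 < Num.sqrt eps by rewrite sqrtr_gt0.
have : enorm (x *m J) <= H / Num.sqrt eps * eps.
  apply: (le_trans (enorm_mulmx_le _ _)).
  apply: (le_trans (ler_wpM2r (enorm_ge0 x) J_le)).
  by rewrite ler_wpM2l ?divr_ge0 ?sqrtr_ge0.
rewrite -(ler_pM2l sqrt_gt0) [X in _ <= X]mulrA mulrCA divff ?gt_eqF // mulr1 => xJ_le.
have norm_le : enorm ((D * Num.sqrt eps) *: (x *m J)) <= `|D| * (H * eps).
  by rewrite enormZ normrM (ger0_norm (ltW sqrt_gt0)) -mulrA ler_wpM2l.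
have : enorm ((D * Num.sqrt eps) *: (x *m J)) ^+ 2 <= (`|D| * (H * eps)) ^+ 2.
  by rewrite lerXn2r ?nnegrE ?enorm_ge0 ?(le_trans (enorm_ge0 _) norm_le).
by rewrite !exprMn real_normK ?num_real // mulrA.
Qed.

(* Young's inequality with weight [eps] separates the exact step from the three perturbations. *)
Lemma perturbed_descent_sqr_le m (b e f r : 'rV[R]_m) (A a gap DH Z alpha eps : R) :
  0 < eps -> 0 <= alpha <= 1 -> 0 <= a -> 0 <= gap -> 0 <= DH -> 0 <= Z ->
  enorm b ^+ 2 <= A - 2 * (1 - alpha) * a * gap ->
  enorm f ^+ 2 <= DH * eps ^+ 2 -> enorm r ^+ 2 <= Z * eps ^+ 2 ->
  enorm (b - e - f + r) ^+ 2
    <= (1 + eps) * A - 2 * (1 - 4 * alpha) * a * gap + eps * (4 * eps + 3) * (DH + Z)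
       + (4 * eps + 3) / eps * enorm e ^+ 2.
Proof.
move=> eps_gt0 /andP[alpha_ge0 alpha_le1] a_ge0 gap_ge0 DH_ge0 Z_ge0 b_le f_le r_le.
have P_ge0 := mulr_ge0 a_ge0 gap_ge0.
rewrite -!(mulrA _ a) in b_le *; move: (a * gap) P_ge0 => P P_ge0 in b_le *.
have young := enormD_sqr_le b (- e - f + r) eps_gt0.
have split3 := enormD3_sqr_le (- e) (- f) r; rewrite !enormN in split3.
have -> : b - e - f + r = b + (- e - f + r) by rewrite !addrA.
apply: (le_trans young).
have inv_gt0 : 0 < eps^-1 by rewrite invr_gt0.
have -> : (4 * eps + 3) / eps = 4 + 3 * eps^-1 by field; rewrite gt_eqF.
have exact_part : (1 + eps) * enorm b ^+ 2 <= (1 + eps) * (A - 2 * (1 - alpha) * P).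
  by rewrite ler_pM2l // ltr_pwDr.
have perturbations : (1 + eps^-1) * enorm (- e - f + r) ^+ 2
    <= (1 + eps^-1) * (3 * (enorm e ^+ 2 + enorm f ^+ 2 + enorm r ^+ 2)).
  by rewrite ler_pM2l // ltr_pwDr.
have f_part : eps^-1 * enorm f ^+ 2 <= DH * eps.
  have -> : DH * eps = eps^-1 * (DH * eps ^+ 2) by field; rewrite gt_eqF.
  by rewrite ler_pM2l.
have r_part : eps^-1 * enorm r ^+ 2 <= Z * eps.
  have -> : Z * eps = eps^-1 * (Z * eps ^+ 2) by field; rewrite gt_eqF.
  by rewrite ler_pM2l.
have := sqr_ge0 (enorm e); have := mulr_ge0 (ltW inv_gt0) (sqr_ge0 (enorm e)).
have one_alpha_ge0 : 0 <= 1 - alpha by rewrite subr_ge0.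
have := mulr_ge0 (mulr_ge0 (ltW eps_gt0) P_ge0) one_alpha_ge0.
have := mulr_ge0 alpha_ge0 P_ge0.
have := mulr_ge0 (sqr_ge0 eps) DH_ge0; have := mulr_ge0 (sqr_ge0 eps) Z_ge0.
nra.
Qed.

End StepEstimates.

Theorem mainTheorem16 (R : realType) (n c d : nat)
  (h : 'I_n -> 'rV[R]_d -> 'rV[R]_c) (phi : 'I_n -> 'rV[R]_c -> R)
  (hstar : 'I_n -> 'rV[R]_c)
  (Lphi G V H D alpha eps : R) (T : nat)
  (eta : nat -> R) (alph : nat -> 'I_n -> R)
  (w v vreg : nat -> 'rV[R]_d) :
  (0 < n)%N -> (0 < c)%N -> (0 < d)%N ->
  (* phi_i attains its minimum at hstar i *)
  (forall i x, phi i (hstar i) <= phi i x) ->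
  (* Assumption A *)
  (forall i, convex_fun (phi i) /\ bounded_below (phi i) /\ smooth_with Lphi (phi i)) ->
  (* Assumption B *)
  0 < G ->
  (forall i (j : 'I_c), C2 (fun x => h i x ord0 j)) ->
  (forall i (j : 'I_c) x, opnorm (hess (fun y => h i y ord0 j) x) <= G) ->
  (* iteration setup *)
  0 < eps ->
  (forall t, (t < T)%N -> forall i, 0 < alph t i) ->
  (forall t, (t < T)%N -> forall u,
     PsiT h phi (eta t) (alph t) eps (w t) (vreg t)
       <= PsiT h phi (eta t) (alph t) eps (w t) u) ->
  (* Algorithm 2 *)
  (forall t, (t < T)%N -> w t.+1 = w t - eta t *: v t) ->
  (forall t, (t < T)%N -> enorm (v t - vreg t) <= eps) ->
  (* Assumption C *)
  0 < V ->
  (forall t, (t < T)%N -> exists vhat : 'rV[R]_d,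
     enorm vhat ^+ 2 <= V /\ PhiT h phi (eta t) (alph t) (w t) vhat <= eps ^+ 2) ->
  (* Assumption D *)
  0 < H ->
  (forall i t, (t < T)%N -> opnorm (jacobian (h i) (w t)) <= H / Num.sqrt eps) ->
  (* step size and alpha *)
  0 < D ->
  (forall t, (t < T)%N -> eta t = D * Num.sqrt eps) ->
  0 < alpha -> alpha < 1 / 4 ->
  (forall t i, (t < T)%N -> alph t i <= alpha / Lphi) ->
  forall (i : 'I_n) (t : nat), (t < T)%N ->
    enorm (h i (w t.+1) - hstar i) ^+ 2
    <= (1 + eps) * enorm (h i (w t) - hstar i) ^+ 2
       - 2 * (1 - 4 * alpha) * alph t i * (phi i (h i (w t)) - phi i (hstar i))
       + eps * (4 * eps + 3) *
           (D ^+ 2 * H ^+ 2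
            + c%:R * (2 + (V + eps ^+ 2 + 2) * G * D ^+ 2) ^+ 2)
       + (4 * eps + 3) / eps *
           enorm (eta t *: (vreg t *m jacobian (h i) (w t))
                  - alph t i *: grad (phi i) (h i (w t))) ^+ 2.
Proof.
move=> _ _ _ phi_min phi_A G_gt0 h_C2 h_hess eps_gt0 alph_gt0 vreg_min step v_near
  _ assC H_gt0 assD _ eta_def alpha_gt0 alpha_lt alph_le i t tT.
have a_gt0 := alph_gt0 t tT i; have eta_t := eta_def t tT.
have L_gt0 : 0 < Lphi := denom_gt0_of_le_div a_gt0 alpha_gt0 (alph_le t i tT).
have aL_le : alph t i * Lphi <= alpha by rewrite -ler_pdivlMr ?alph_le.
have [phi_cvx [_ phi_smooth]] := phi_A i.
have vreg_le : enorm (vreg t) ^+ 2 <= 2 + V.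
  have [vhat [vhat_le Phi_le]] := assC t tT.
  exact: regularized_minimizer_sqr_le (PhiT_ge0 _ _ _ _ _) (vreg_min t tT vhat) vhat_le Phi_le.
set J := jacobian (h i) (w t); set g := grad (phi i) (h i (w t)).
set e := eta t *: (vreg t *m J) - alph t i *: g.
set f := eta t *: ((v t - vreg t) *m J).
set r := h i (w t - eta t *: v t) - h i (w t) + (eta t *: v t) *m J.
have uJ : (eta t *: v t) *m J = e + alph t i *: g + f.
  by rewrite /e /f -!scalemxAl mulmxBl scalerBr subrK addrC subrK.
have -> : h i (w t.+1) - hstar i = h i (w t) - hstar i - alph t i *: g - e - f + r.
  by rewrite step // /r uJ; apply/rowP => l; rewrite !mxE; ring.
apply: perturbed_descent_sqr_le => //.
- by rewrite (ltW alpha_gt0); lra.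
- exact: ltW.
- by rewrite subr_ge0.
- exact: mulr_ge0 (sqr_ge0 _) (sqr_ge0 _).
- exact: mulr_ge0 (ler0n _ _) (sqr_ge0 _).
- by have := gradient_step_sqr_le phi_smooth (h i (w t)) phi_cvx L_gt0 (phi_min i) a_gt0 aL_le.
- by rewrite /f eta_t step_error_sqr_le ?(ltW H_gt0) ?v_near ?assD.
- rewrite /r /J eta_t.
  exact: step_remainder_sqr_le eps_gt0 (ltW G_gt0) (h_C2 i) (h_hess i) (v_near t tT) vreg_le.
Qed.
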